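(* Let $A,B$ be finite nonempty subsets of an abelian group $\mathbf G$ and $k\ge1$ an integer. Then $$R^{(k)}_B[A]\ge\frac{|B|^{2k}}{\lambda_1^2(A,B,k)}\quad\text{and}\quad R^{(k)}_B[A]\ge\frac{|B|^{2k}}{\mathsf E_{2k+1}(A,B)^{1/2}}.$$ Moreover, if $A_1\subseteq A$ and $B^{(y)}\subseteq B^k$ ($y\in A_1$) is an arbitrary family of sets, then for each choice of sign $$\Big|\bigcup_{y\in A_1}\big(B^{(y)}\pm\Delta(y)\big)\Big|\ge\frac{\big(\sum_{y\in A_1}|B^{(y)}|\big)^2}{\mathsf E_{k+1}(A,B)}.$$
   Context: $R^{(k)}_B[A]=\min_{\emptyset\ne Z\subseteq A}|B^k+\Delta(Z)|/|Z|$, where $\Delta(Z)=\{(z,\dots,z)\in\mathbf G^k:z\in Z\}$ and $\Delta(y)=\Delta(\{y\})$; sums in $\mathbf G^k$ are coordinatewise. $(X\circ X)(x)=|\{(a,b)\in X^2:b-a=x\}|$ and $\mathsf E_j(A,B)=\sum_x(A\circ A)(x)(B\circ B)(x)^{j-1}$. $\lambda_1(A,B,k)$ is the largest singular value of the real matrix $\mathbf M$ with rows indexed by $x=(x_1,\dots,x_k)\in B^k-\Delta(A)$ and columns by $y\in A$, with entries $\mathbf M(x,y)=A(y)B(y+x_1)\cdots B(y+x_k)$ (indicator functions), i.e. $\lambda_1=\max_{w\ne0}\|\mathbf Mw\|_2/\|w\|_2$; equivalently $\lambda_1^2=\max\{\sum_s(w\circ w)(s)(B\circ B)(s)^k:\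 \|w\|_2=1,\ \mathrm{supp}\,w\subseteq A\}$ with $(w\circ w)(s)=\sum_y w(y)w(y+s)$. *)

From HB Require Import structures.
From mathcomp Require Import all_boot all_order all_algebra.
From mathcomp Require Import finmap.
From mathcomp Require Import reals.
Unset Printing Implicit Defensive.
Import Order.TTheory GRing.Theory Num.Theory.
Local Open Scope fset_scope.
Local Open Scope ring_scope.

Section Defs.
Variable G : zmodType.

Definition diag (k : nat) (z : G) : 'rV[G]_k := const_mx z.

Definition row_of (k : nat) (B : {fset G}) (f : {ffun 'I_k -> B}) : 'rV[G]_k :=
  \row_i val (f i).

Definition cube (k : nat) (B : {fset G}) : {fset 'rV[G]_k} :=
  [fset row_of k B f | f in {: {ffun 'I_k -> B}}].

Definition diagset (k : nat) (Z : {fset G}) : {fset 'rV[G]_k} :=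
  [fset diag k z | z in Z].

Definition sumset (k : nat) (X Y : {fset 'rV[G]_k}) : {fset 'rV[G]_k} :=
  [fset (x + y)%R | x in X, y in Y].

Definition diffcube (k : nat) (B A : {fset G}) : {fset 'rV[G]_k} :=
  [fset (x - diag k a)%R | x in cube k B, a in A].

Definition repr_diff (X : {fset G}) (x : G) : nat :=
  #|[set p : X * X | val p.2 - val p.1 == x]|.

Definition diffset (X : {fset G}) : {fset G} := [fset (b - a)%R | a in X, b in X].

(* E_j(A,B) = sum_x (A o A)(x) (B o B)(x)^(j-1); the summand vanishes
   outside A - A, so the sum is taken over A - A. *)
Definition energy (j : nat) (A B : {fset G}) : nat :=
  (\sum_(x <- diffset A) repr_diff A x * repr_diff B x ^ (j - 1))%N.

Variable R : realType.

(* R^{(k)}_B[A] = min over nonempty Z subseteq A of |B^k + Delta(Z)| / |Z|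
   (A itself is among the Z, so it is used as the neutral element). *)
Definition ratioZ (k : nat) (B Z : {fset G}) : R :=
  (#|` sumset k (cube k B) (diagset k Z)|)%:R / (#|` Z|)%:R.

Definition Rk (k : nat) (B A : {fset G}) : R :=
  \big[Num.min / ratioZ k B A]_(Z <- fpowerset A | Z != fset0) ratioZ k B Z.

Definition Mentry (k : nat) (A B : {fset G}) (x : 'rV[G]_k) (y : G) : R :=
  ((y \in A) && [forall i : 'I_k, y + x 0 i \in B])%:R.

Definition Mw (k : nat) (A B : {fset G}) (w : {ffun A -> R}) (x : 'rV[G]_k) : R :=
  \sum_(y : A) Mentry k A B x (val y) * w y.

Definition lambda1 (A B : {fset G}) (k : nat) : R :=
  sup (fun t : R => exists w : {ffun A -> R}, w != 0 /\
        t = Num.sqrt (\sum_(x <- diffcube k B A) (Mw k A B w x) ^+ 2)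
            / Num.sqrt (\sum_(y : A) (w y) ^+ 2)).

End Defs.

From HB Require Import structures.
From mathcomp Require Import all_boot all_order all_algebra.
From mathcomp Require Import finmap.
From mathcomp Require Import reals.
From mathcomp Require Import ring lra.
Import Order.TTheory GRing.Theory Num.Theory.
Local Open Scope fset_scope.
Local Open Scope ring_scope.

(* For Z a nonempty subset of A, the |Z| translates B^k + Delta(z), z in Z, each
   of size |B|^k, lie in B^k + Delta(Z), so Cauchy-Schwarz applied to the number
   of translates covering a point gives
     (|Z| |B|^k)^2 <= |B^k + Delta(Z)| * sum_{z,z' in Z} |(B^k + Delta(z)) & (B^k + Delta(z'))|.
   Two translates meet in at most (B o B)(z' - z)^k points, since the condition
   splits coordinatewise.  The overlap sum is |M 1_Z|^2 <= |Z| lambda_1^2, and by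
   Cauchy-Schwarz over the |Z|^2 pairs it is also at most |Z| E_{2k+1}(A,B)^{1/2}.
   The last claim is the same second-moment bound for arbitrary subsets
   B^(y) of B^k, the pairwise overlaps now summing to at most E_{k+1}(A,B). *)

Section Translates.
Variable V : zmodType.
Implicit Types (X : {fset V}) (c x : V).

Lemma mem_translate X c x : (x \in [fset b + c | b in X]) = (x - c \in X).
Proof.
apply/imfsetP/idP => /= [[b Xb ->]|Xxc]; first by rewrite addrK.
by exists (x - c) => //; rewrite subrK.
Qed.

Lemma card_translate X c : #|` [fset b + c | b in X]| = #|` X|.
Proof. by rewrite card_in_imfset //= => x y _ _; apply: addIr. Qed.

Lemma cardfsI_translate_opp X c c' :
  #|` [fset b + c | b in X] `&` [fset b + c' | b in X]| =
  #|` [fset b + - c | b in X] `&` [fset b + - c' | b in X]|.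
Proof.
rewrite -(card_translate _ (- (c + c'))); congr #|` _|; apply/fsetP => x.
rewrite mem_translate !in_fsetI !mem_translate opprK andbC.
by rewrite addrA addrK addrAC addrK !opprK.
Qed.

End Translates.

Section Sums.
Variable R : numDomainType.

Lemma sumr_const_seq (I : Type) (s : seq I) (c : R) :
  \sum_(i <- s) c = (size s)%:R * c.
Proof. by rewrite -sum1_size natr_sum mulr_suml; apply: eq_bigr => i _; rewrite mul1r. Qed.

Lemma ler_sum_seq (I : eqType) (s : seq I) (F G : I -> R) :
  (forall i, i \in s -> F i <= G i) -> \sum_(i <- s) F i <= \sum_(i <- s) G i.
Proof. by move=> FG; rewrite big_seq [leRHS]big_seq ler_sum. Qed.

Lemma ler_sum_fsubset (T : choiceType) (A1 A : {fset T}) (F : T -> R) :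
  A1 `<=` A -> (forall x, x \in A -> 0 <= F x) ->
  \sum_(x <- A1) F x <= \sum_(x <- A) F x.
Proof.
move=> sA F0; rewrite (eq_big_seq (fun x => if x \in A1 then F x else 0)).
- rewrite (big_fset_incl _ sA); last by move=> x _ /negbTE ->.
  by apply: ler_sum_seq => x /F0; case: ifP.
- by move=> x ->.
Qed.

Lemma ler_sum_pairs_fsubset (T : choiceType) (A1 A : {fset T}) (F : T -> T -> R) :
  A1 `<=` A -> (forall x y, 0 <= F x y) ->
  \sum_(x <- A1) \sum_(y <- A1) F x y <= \sum_(x <- A) \sum_(y <- A) F x y.
Proof.
move=> sA F0; apply: le_trans (ler_sum_fsubset _ _ _ (fun x => \sum_(y <- A) F x y) sA _).
  by apply: ler_sum_seq => x _; apply: ler_sum_fsubset.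
by move=> x _; apply: sumr_ge0.
Qed.

End Sums.

Arguments ler_sum_pairs_fsubset [R T A1 A F].

Lemma sqr_sum_le (R : realDomainType) (I : Type) (s : seq I) (f : I -> R) :
  (\sum_(i <- s) f i) ^+ 2 <= (size s)%:R * \sum_(i <- s) f i ^+ 2.
Proof.
have sq_diff_ge0 : 0 <= \sum_(i <- s) \sum_(j <- s) (f i - f j) ^+ 2.
  by apply: sumr_ge0 => i _; apply: sumr_ge0 => j _; exact: sqr_ge0.
suff E : \sum_(i <- s) \sum_(j <- s) (f i - f j) ^+ 2 =
    ((size s)%:R * \sum_(i <- s) f i ^+ 2 - (\sum_(i <- s) f i) ^+ 2) *+ 2.
  by rewrite E pmulrn_lge0 // subr_ge0 in sq_diff_ge0.
under eq_bigr => i _.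
  rewrite (eq_bigr (fun j => f i ^+ 2 + f j ^+ 2 - (f i * f j) *+ 2)); last first.
    by move=> j _; rewrite sqrrB addrAC.
  rewrite !big_split /= sumrN sumr_const_seq sumrMnl -mulr_sumr.
  over.
rewrite !big_split /= sumrN sumr_const_seq sumrMnl -mulr_suml -mulr_sumr expr2.
ring.
Qed.

Section SecondMoment.
Variables (R : realDomainType) (T : choiceType).

Lemma natr_cardfsE [X U : {fset T}] : X `<=` U ->
  (#|` X|)%:R = \sum_(u <- U) ((u \in X)%:R : R).
Proof.
move=> XU; rewrite -(big_fset_incl _ XU); last by move=> x _ /negbTE ->.
by rewrite card_fset_sum1 natr_sum; apply: eq_big_seq => x ->.
Qed.

Variables (I : eqType) (s : seq I) (F : I -> {fset T}) (U : {fset T}).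
Hypothesis FU : forall i, i \in s -> F i `<=` U.

Lemma sum_natr_cardfs :
  \sum_(i <- s) ((#|` F i|)%:R : R) = \sum_(u <- U) \sum_(i <- s) ((u \in F i)%:R : R).
Proof. by rewrite exchange_big; apply: eq_big_seq => i /FU /natr_cardfsE. Qed.

Lemma sum_natr_cardfsI :
  \sum_(i <- s) \sum_(j <- s) ((#|` F i `&` F j|)%:R : R) =
  \sum_(u <- U) (\sum_(i <- s) ((u \in F i)%:R : R)) ^+ 2.
Proof.
under eq_big_seq => i si.
  under eq_bigr => j _.
    rewrite (natr_cardfsE (fsubset_trans (fsubsetIl _ _) (FU _ si))).
    under eq_bigr do rewrite in_fsetI -mulnb natrM.
    over.
  rewrite exchange_big /=.
  over.
rewrite exchange_big /=; apply: eq_bigr => u _.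
by rewrite expr2 mulr_suml; apply: eq_bigr => i _; rewrite mulr_sumr.
Qed.

Lemma sqr_sum_cardfs_le :
  (\sum_(i <- s) ((#|` F i|)%:R : R)) ^+ 2 <=
  (#|` U|)%:R * \sum_(i <- s) \sum_(j <- s) ((#|` F i `&` F j|)%:R : R).
Proof. by rewrite sum_natr_cardfs sum_natr_cardfsI; exact: sqr_sum_le. Qed.

End SecondMoment.

Arguments sum_natr_cardfsI R [T I s F U].
Arguments sqr_sum_cardfs_le R [T I s F U].

Lemma size_enum_finmem (T : finType) (P : {pred T}) :
  size (enum_finmem (mem P)) = #|P|.
Proof.
by rewrite cardE; apply/perm_size/uniq_perm; rewrite ?enum_finmem_uniq ?enum_uniq.
Qed.

Section Cubes.
Variables (G : zmodType) (k : nat).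
Implicit Types (B : {fset G}) (a d : G).

Lemma mem_cube B (v : 'rV[G]_k) : (v \in cube G k B) = [forall i, v 0 i \in B].
Proof.
apply/imfsetP/forallP => /= [[f _ ->] i|vB]; first by rewrite /row_of mxE fsvalP.
by exists [ffun i => [` vB i]] => //; apply/rowP => i; rewrite /row_of !mxE ffunE.
Qed.

Lemma card_cube B : #|` cube G k B| = (#|` B| ^ k)%N.
Proof.
rewrite card_imfset ?size_enum_finmem ?card_ffun ?card_ord ?cardfE // => f g fg.
apply/ffunP => i; apply: val_inj.
by have := congr1 (fun v : 'rV[G]_k => v 0 i) fg; rewrite /row_of !mxE.
Qed.

Lemma diagN a : diag G k (- a) = - diag G k a.
Proof. exact: raddfN. Qed.

Lemma diagB a a' : diag G k (a - a') = diag G k a - diag G k a'.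
Proof. exact: raddfB. Qed.

Lemma card_shift_le_repr_diff B d :
  (#|[set a : B | (val a + d)%R \in B]| <= repr_diff G B d)%N.
Proof.
rewrite /repr_diff -(card_in_imset (f := fst)) => [|[a b] [a' b']]; last first.
  rewrite !inE /= => /eqP ab /eqP a'b' aa'; subst a'; congr pair; apply: val_inj.
  by rewrite -(subrK (val a) (val b)) ab -a'b' subrK.
apply/subset_leq_card/subsetP => a; rewrite inE => aB.
by apply/imsetP; exists (a, [` aB]); rewrite // inE /= addrC addKr.
Qed.

Lemma card_cube_shift_le B d :
  (#|` [fset x in cube G k B | (x + diag G k d)%R \in cube G k B]| <= repr_diff G B d ^ k)%N.
Proof.
set Q := [set a : B | val a + d \in B].
apply: (@leq_trans #|` [fset row_of G k B f | f in ffun_on (mem Q)]|).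
  apply/fsubset_leq_card/fsubsetP => x; rewrite !inE => /andP[].
  case/imfsetP => f _ -> /= fdB; apply/imfsetP; exists f => //=.
  apply/ffun_onP => i; rewrite inE.
  by move: fdB; rewrite mem_cube => /forallP /(_ i); rewrite /row_of /diag !mxE.
apply: (leq_trans (leq_imfset_card _ _ _)).
rewrite size_enum_finmem card_ffun_on card_ord.
have QB := card_shift_le_repr_diff B d.
by elim: k => // n IH; rewrite !expnS leq_mul.
Qed.

Lemma cardfsI_translate_cube_le B (X X' : {fset 'rV[G]_k}) c c' :
  X `<=` cube G k B -> X' `<=` cube G k B ->
  (#|` [fset (b + diag G k c)%R | b in X] `&` [fset (b + diag G k c')%R | b in X']|
     <= repr_diff G B (c' - c)%R ^ k)%N.
Proof.
move=> /fsubsetP XB /fsubsetP X'B; apply: leq_trans (card_cube_shift_le B (c' - c)).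
set I := _ `&` _; rewrite -(card_translate _ I (- diag G k c')).
apply/fsubset_leq_card/fsubsetP => x.
rewrite mem_translate opprK in_fsetI !mem_translate !inE addrK => /andP[xX /X'B ->].
by rewrite diagB addrA XB.
Qed.

End Cubes.

Section Energy.
Variables (G : zmodType) (R : numDomainType).
Implicit Types (A B : {fset G}).

Lemma sum_pairs_diff A (f : G -> R) :
  \sum_(a <- A) \sum_(b <- A) f (b - a) =
  \sum_(d <- diffset G A) (repr_diff G A d)%:R * f d.
Proof.
rewrite big_seq_fsetE /=.
under eq_bigr do rewrite big_seq_fsetE /=.
rewrite pair_big /=.
transitivity (\sum_(p : A * A) \sum_(d <- diffset G A)
    (if d == val p.2 - val p.1 then f d else 0)).
  apply: eq_bigr => p _; rewrite -big_mkcond -big_filter.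
  rewrite (@filter_pred1_uniq _ _ (val p.2 - val p.1)) ?big_seq1 ?fset_uniq //.
  exact: (in_imfset2 _ (fun a b => b - a)) (fsvalP _) (fsvalP _).
rewrite exchange_big /=; apply: eq_bigr => d _.
rewrite -big_mkcond /= sumr_const mulr_natl; congr (_ *+ _).
by apply: eq_card => p; rewrite inE eq_sym.
Qed.

Lemma natr_energy j A B : ((energy G j A B)%:R : R) =
  \sum_(d <- diffset G A) (repr_diff G A d)%:R * (repr_diff G B d)%:R ^+ (j - 1).
Proof. by rewrite natr_sum; apply: eq_bigr => d _; rewrite natrM natrX. Qed.

Lemma sum_pairs_repr_diff_expn A B j (s : bool) :
  \sum_(a <- A) \sum_(b <- A)
     ((repr_diff G B ((if s then b else - b) - (if s then a else - a)) ^ j)%N%:R : R)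
  = (energy G j.+1 A B)%:R.
Proof.
rewrite natr_energy subn1 /=.
under [RHS]eq_bigr do rewrite -natrX.
rewrite -(sum_pairs_diff A (fun d => (repr_diff G B d ^ j)%N%:R)).
case: s => //; rewrite exchange_big /=.
by apply: eq_bigr => a _; apply: eq_bigr => b _; rewrite opprK addrC.
Qed.

End Energy.

Section Overlap.
Variables (G : zmodType) (R : realType) (k : nat).
Implicit Types (A B Z : {fset G}).

Definition cube_shift B z : {fset 'rV[G]_k} := [fset (b + diag G k z)%R | b in cube G k B].

Definition overlap B Z : R :=
  \sum_(z <- Z) \sum_(z' <- Z) (#|` cube_shift B z `&` cube_shift B z'|)%:R.

Lemma overlap_ge0 B Z : 0 <= overlap B Z.
Proof. by apply: sumr_ge0 => z _; apply: sumr_ge0 => z' _; exact: ler0n. Qed.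

Lemma overlap_le_repr_diff B Z :
  overlap B Z <= \sum_(z <- Z) \sum_(z' <- Z) ((repr_diff G B (z' - z) ^ k)%N%:R : R).
Proof.
apply: ler_sum_seq => z _; apply: ler_sum_seq => z' _.
by rewrite ler_nat cardfsI_translate_cube_le.
Qed.

Lemma sqr_card_le_sumset_overlap B Z :
  ((#|` Z| * #|` B| ^ k)%N%:R : R) ^+ 2 <=
  (#|` sumset G k (cube G k B) (diagset G k Z)|)%:R * overlap B Z.
Proof.
have shift_sub z : z \in Z -> cube_shift B z `<=` sumset G k (cube G k B) (diagset G k Z).
  move=> zZ; apply/fsubsetP => _ /imfsetP[b bB ->].
  by apply: (in_imfset2 _ (fun x y => x + y)) => //=; apply: in_imfset.
have := sqr_sum_cardfs_le R shift_sub.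
rewrite (eq_bigr (fun=> ((#|` B| ^ k)%N%:R : R))) => [|z _]; last first.
  by rewrite card_translate card_cube.
by rewrite sumr_const_seq natrM.
Qed.

Lemma ratioZ_ge B Z (X : R) : Z != fset0 -> 0 <= X -> overlap B Z <= (#|` Z|)%:R * X ->
  (#|` B| ^ (2 * k))%:R / X <= ratioZ G R k B Z.
Proof.
move=> Z0 X0 ovX; have [->|Xneq0] := eqVneq X 0; first by rewrite invr0 mulr0 divr_ge0.
have Xgt0 : 0 < X by rewrite lt0r Xneq0.
have Zgt0 : (0 : R) < (#|` Z|)%:R by rewrite ltr0n cardfs_gt0.
have cs := sqr_card_le_sumset_overlap B Z; rewrite natrM in cs.
rewrite /ratioZ; set S := (#|` sumset _ _ _ _|)%:R in cs *.
have S0 : 0 <= S := ler0n _ _.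
rewrite ler_pdivrMr // mulrAC ler_pdivlMr // mulnC expnM natrX.
have ovS : S * overlap B Z <= S * ((#|` Z|)%:R * X) by exact: ler_wpM2l.
rewrite -(ler_pM2l Zgt0); move: cs ovS; rewrite exprMn; lra.
Qed.

Lemma overlap_le_energy A B Z : Z `<=` A ->
  overlap B Z <= (#|` Z|)%:R * Num.sqrt ((energy G (2 * k + 1) A B)%:R).
Proof.
move=> ZA; apply: le_trans (overlap_le_repr_diff B Z) _.
set V := \sum_(z <- Z) _.
have V0 : 0 <= V by apply: sumr_ge0 => z _; apply: sumr_ge0 => z' _.
suff : V ^+ 2 <= ((#|` Z|)%:R * Num.sqrt (energy G (2 * k + 1) A B)%:R) ^+ 2.
  by rewrite ler_pXn2r // ?nnegrE // mulr_ge0 ?sqrtr_ge0.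
rewrite exprMn sqr_sqrtr //.
have := sqr_sum_le R _ [seq (z, z') | z <- (Z : seq G), z' <- (Z : seq G)]
  (fun p => ((repr_diff G B (p.2 - p.1) ^ k)%N%:R : R)).
rewrite !big_allpairs size_allpairs -/V natrM -expr2 => /le_trans; apply.
apply: ler_wpM2l; first exact: exprn_ge0.
rewrite addn1 -(sum_pairs_repr_diff_expn G R A B (2 * k) true) /=.
apply: le_trans (ler_sum_pairs_fsubset ZA _) => [|x y]; last exact: ler0n.
apply: ler_sum_seq => z _; apply: ler_sum_seq => z' _.
by rewrite -natrX -expnM mulnC.
Qed.

Lemma card_bigfcup_translate_ge A B (A1 : {fset G}) (Bf : G -> {fset 'rV[G]_k}) (s : bool) :
  A1 `<=` A -> (forall y, y \in A1 -> Bf y `<=` cube G k B) ->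
  (#|` \bigcup_(y <- A1) [fset (b + diag G k (if s then y else - y))%R | b in Bf y]|)%:R
    >= ((\sum_(y <- A1) #|` Bf y|)%N%:R) ^+ 2 / (energy G k.+1 A B)%:R :> R.
Proof.
move=> A1A BfB.
set F := fun y => [fset (b + diag G k (if s then y else - y))%R | b in Bf y].
have FU y : y \in A1 -> F y `<=` \bigcup_(y <- A1) F y by move=> yA1; exact: bigfcup_sup.
have cs := sqr_sum_cardfs_le R FU.
have ovE : \sum_(y <- A1) \sum_(y' <- A1) ((#|` F y `&` F y'|)%:R : R) <= (energy G k.+1 A B)%:R.
  rewrite -(sum_pairs_repr_diff_expn G R A B k s).
  apply: le_trans (ler_sum_pairs_fsubset A1A _) => [|y y']; last exact: ler0n.
  apply: ler_sum_seq => y yA1; apply: ler_sum_seq => y' y'A1.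
  by rewrite ler_nat cardfsI_translate_cube_le ?BfB.
rewrite natr_sum (eq_bigr (fun y => (#|` F y|)%:R)) => [|y _]; last by rewrite card_translate.
set E := (energy _ _ _ _)%:R in ovE *.
have [->|Eneq0] := eqVneq E 0; first by rewrite invr0 mulr0.
rewrite ler_pdivrMr ?lt0r ?Eneq0 ?ler0n //.
by apply: (le_trans cs); apply: ler_wpM2l.
Qed.

Lemma sqr_Mw_le A B (w : {ffun A -> R}) x :
  Mw G R k A B w x ^+ 2 <= (#|` A|)%:R * \sum_(y : A) w y ^+ 2.
Proof.
rewrite cardfE cardT enumT /Mw; apply: le_trans (sqr_sum_le R _ _ _) _.
apply/ler_wpM2l/ler_sum => [|y _]; first exact: ler0n.
by rewrite exprMn /Mentry; case: (_ && _); rewrite ?expr1n ?expr0n ?mul1r ?mul0r ?sqr_ge0.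
Qed.

Lemma lambda1_ge A B (w : {ffun A -> R}) : w != 0 ->
  Num.sqrt (\sum_(x <- diffcube G k B A) Mw G R k A B w x ^+ 2)
    / Num.sqrt (\sum_(y : A) w y ^+ 2) <= lambda1 G R A B k.
Proof.
move=> w0; apply: sup_upper_bound; last by exists w.
split; first by eexists; exists w.
exists (Num.sqrt ((#|` diffcube G k B A| * #|` A|)%N%:R)) => _ [v [_ ->]].
set N := \sum_(y : A) v y ^+ 2.
have N0 : 0 <= N by apply: sumr_ge0 => y _; exact: sqr_ge0.
have [->|Nneq0] := eqVneq N 0; first by rewrite sqrtr0 invr0 mulr0 sqrtr_ge0.
rewrite ler_pdivrMr ?sqrtr_gt0 ?lt0r ?Nneq0 // -sqrtrM ?ler0n // ler_sqrt.
  apply: le_trans (_ : _ <= \sum_(x <- diffcube G k B A) (#|` A|)%:R * N) _.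
    by apply: ler_sum_seq => x _; exact: sqr_Mw_le.
  by rewrite sumr_const_seq natrM mulrA.
by rewrite mulr_ge0 ?ler0n.
Qed.

Definition indicator A Z : {ffun A -> R} := [ffun y => (val y \in Z)%:R].

Lemma sum_indicator A Z (F : G -> R) : Z `<=` A ->
  \sum_(y : A) indicator A Z y * F (val y) = \sum_(z <- Z) F z.
Proof.
move=> ZA; under eq_bigr do rewrite ffunE.
transitivity (\sum_(y <- A) (y \in Z)%:R * F y); first by rewrite big_seq_fsetE.
rewrite -(big_fset_incl _ ZA) => [|y _ /negbTE ->]; last by rewrite mul0r.
by apply: eq_big_seq => z ->; rewrite mul1r.
Qed.

Lemma indicator_neq0 A Z : Z `<=` A -> Z != fset0 -> indicator A Z != 0.
Proof.
move=> ZA /fset0Pn[z zZ]; apply/eqP => /ffunP /(_ [` fsubsetP ZA _ zZ]).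
by rewrite !ffunE /= zZ => /eqP; rewrite oner_eq0.
Qed.

Lemma sum_sqr_indicator A Z : Z `<=` A -> \sum_(y : A) indicator A Z y ^+ 2 = (#|` Z|)%:R.
Proof.
move=> ZA; rewrite card_fset_sum1 natr_sum -(sum_indicator A Z (fun=> 1) ZA).
by apply: eq_bigr => y _; rewrite ffunE; case: (_ \in _); rewrite ?expr1n ?expr0n ?mulr1.
Qed.

Lemma Mw_indicator A B Z x : Z `<=` A ->
  Mw G R k A B (indicator A Z) x = \sum_(z <- Z) (x \in cube_shift B (- z))%:R.
Proof.
move=> ZA; rewrite /Mw; under eq_bigr do rewrite mulrC.
rewrite sum_indicator //; apply: eq_big_seq => z zZ.
rewrite /Mentry (fsubsetP ZA _ zZ) mem_translate diagN opprK mem_cube /=.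
by congr (nat_of_bool _)%:R; apply: eq_forallb => i; rewrite !mxE addrC.
Qed.

(* The row of [M] at [x] counts the [z] with [x] in [B^k - Delta(z)], hence the
   [-z] translates, whose pairwise overlaps are those of the [+z] translates. *)
Lemma overlap_sum_sqr_Mw A B Z : Z `<=` A ->
  overlap B Z = \sum_(x <- diffcube G k B A) Mw G R k A B (indicator A Z) x ^+ 2.
Proof.
move=> ZA.
have shift_sub z : z \in Z -> cube_shift B (- z) `<=` diffcube G k B A.
  move=> zZ; apply/fsubsetP => _ /imfsetP[b bB ->].
  rewrite diagN; apply: (in_imfset2 _ (fun x a => x - diag G k a)) => //=.
  exact: (fsubsetP ZA).
under [RHS]eq_bigr do rewrite Mw_indicator //.
rewrite -(sum_natr_cardfsI R shift_sub); apply: eq_bigr => z _; apply: eq_bigr => z' _.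
by rewrite /cube_shift cardfsI_translate_opp !diagN.
Qed.

Lemma overlap_le_lambda1 A B Z : Z `<=` A -> Z != fset0 ->
  overlap B Z <= (#|` Z|)%:R * lambda1 G R A B k ^+ 2.
Proof.
move=> ZA Z0; have := lambda1_ge A B _ (indicator_neq0 A Z ZA Z0).
rewrite sum_sqr_indicator // -overlap_sum_sqr_Mw //.
have Zgt0 : (0 : R) < Num.sqrt (#|` Z|)%:R by rewrite sqrtr_gt0 ltr0n cardfs_gt0.
rewrite ler_pdivrMr // => ov_le.
rewrite -[overlap B Z]sqr_sqrtr ?overlap_ge0 // -[X in X * _]sqr_sqrtr ?ler0n //.
rewrite -exprMn mulrC ler_pXn2r ?nnegrE ?sqrtr_ge0 //.
exact: le_trans (sqrtr_ge0 _) ov_le.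
Qed.

Lemma Rk_ge A B (X : R) : A != fset0 -> 0 <= X ->
  (forall Z, Z `<=` A -> Z != fset0 -> overlap B Z <= (#|` Z|)%:R * X) ->
  (#|` B| ^ (2 * k))%:R / X <= Rk G R k B A.
Proof.
move=> A0 X0 ovX; rewrite /Rk big_seq_cond; elim/big_ind: _.
- exact: ratioZ_ge A0 X0 (ovX _ (fsubset_refl _) A0).
- by move=> x y xge yge; rewrite le_min xge yge.
move=> Z /andP[]; rewrite fpowersetE => ZA Z0.
exact: ratioZ_ge Z0 X0 (ovX _ ZA Z0).
Qed.

End Overlap.

Theorem theorem42 (G : zmodType) (R : realType) (A B : {fset G}) (k : nat)
  (hA : A != fset0) (hB : B != fset0) (hk : (1 <= k)%N) :
  [/\ Rk G R k B A >= (#|` B| ^ (2 * k))%:R / (lambda1 G R A B k) ^+ 2,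
      Rk G R k B A >= (#|` B| ^ (2 * k))%:R / Num.sqrt ((energy G (2 * k + 1) A B)%:R)
    & forall (A1 : {fset G}) (Bf : G -> {fset 'rV[G]_k}) (s : bool),
        A1 `<=` A ->
        (forall y, y \in A1 -> Bf y `<=` cube G k B) ->
        (#|` \bigcup_(y <- A1) [fset (b + diag G k (if s then y else - y))%R | b in Bf y]|)%:R
          >= ((\sum_(y <- A1) #|` Bf y|)%N%:R) ^+ 2 / (energy G k.+1 A B)%:R :> R].
Proof.
split=> [||A1 Bf s]; last exact: card_bigfcup_translate_ge.
- apply: Rk_ge => // [|Z ZA Z0]; [exact: sqr_ge0 | exact: overlap_le_lambda1].
- apply: Rk_ge => // [|Z ZA Z0]; [exact: sqrtr_ge0 | exact: overlap_le_energy].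
Qed.
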